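(* Let $c\in(0,1]$ be a constant. For every $N,M$, every input $X=(x_1,\dots,x_N)\in[M]^N$ and every (sufficiently large) positive integer $T$, run the following sampling procedure $\mathcal{S}_T$: set $U:=24T^{1+c}\ln T$; choose indices $i_1,\dots,i_U\in[N]$ independently and uniformly at random (with replacement); query $x_{i_1},\dots,x_{i_U}$; for each $j\in[M]$ let $z_j$ be the number of occurrences of $j$ in $(x_{i_1},\dots,x_{i_U})$, and output $\widetilde\kappa_j:=\frac{N}{U}z_j$. Let $\kappa_j$ be the number of indices $i\in[N]$ with $x_i=j$. Then with probability $1-O(1/T)$ (the implied constant independent of $N,M,X$), we have \[ |\widetilde\kappa_j-\kappa_j|\le \frac{N}{T}+\frac{\kappa_j}{T^{c}}\quad\text{for all } j\in[M]. \] *)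

From mathcomp Require Import all_boot.
From Stdlib Require Import Reals ZArith.
Set Implicit Arguments. Unset Strict Implicit. Unset Printing Implicit Defensive.

Definition Rleb (x y : R) : bool := if Rle_dec x y then true else false.

(* ceiling of a real, as a nat (negative values are sent to 0) *)
Definition nat_ceil (x : R) : nat := Z.to_nat (- Int_part (- x))%Z.

Definition sample_size (c : R) (T : nat) : nat :=
  nat_ceil (24 * Rpower (INR T) (1 + c) * ln (INR T))%R.

Definition kappa (N M : nat) (X : 'I_N -> 'I_M) (j : 'I_M) : nat :=
  #|[set i : 'I_N | X i == j]|.

(* z_j = number of occurrences of j in (x_{i_1},...,x_{i_U}),
   where the sample s maps k in [U] to the index i_k in [N] *)
Definition zcount (N M U : nat) (X : 'I_N -> 'I_M) (s : {ffun 'I_U -> 'I_N})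
  (j : 'I_M) : nat :=
  #|[set k : 'I_U | X (s k) == j]|.

Definition kappa_est (N M U : nat) (X : 'I_N -> 'I_M) (s : {ffun 'I_U -> 'I_N})
  (j : 'I_M) : R :=
  (INR N / INR U * INR (zcount X s j))%R.

Definition good_sample (c : R) (T N M U : nat) (X : 'I_N -> 'I_M)
  (s : {ffun 'I_U -> 'I_N}) : bool :=
  [forall j : 'I_M,
     Rleb (Rabs (kappa_est X s j - INR (kappa X j)))
          (INR N / INR T + INR (kappa X j) / Rpower (INR T) c)%R].

(* Probability that the sampling procedure S_T fails: the U indices are drawn
   independently and uniformly from [N], i.e. s is uniform on [N]^[U]. *)
Definition fail_prob (c : R) (T N M : nat) (X : 'I_N -> 'I_M) : R :=
  (INR #|[set s : {ffun 'I_(sample_size c T) -> 'I_N} | ~~ good_sample c T X s]|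
   / INR (N ^ sample_size c T))%R.

(* Enumerating the N^U equally likely samples, the count z_j of a value j is a sum of U independent
   indicators of mean kappa_j / N, so sum_s exp(th z_j s) = (N + (e^th - 1) kappa_j)^U
   <= N^U exp((e^th - 1) mu_j) with mu_j = U kappa_j / N.  The j-th estimate fails exactly when
   |z_j - mu_j| > t_j := U/T + mu_j/T^c, and Markov's inequality for exp(+-th z_j) gives Chernoff
   bounds for both tails.  Since U >= 24 T^(1+c) ln T we have t_j >= 24 ln T and
   t_j^2 >= 96 mu_j ln T, so each tail has probability at most 5 mu_j T^-12.  The factor mu_j is
   the point: the union bound over all j then costs sum_j mu_j = U, whatever M is, and
   5 U T^-12 <= 125 / T. *)

From mathcomp Require Import Rstruct.
From mathcomp Require Import all_boot all_order all_algebra.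
From Stdlib Require Import Reals ZArith Lra Lia.
(* Importing [Reals] after MathComp rebinds the [%N] delimiter to binary naturals. *)
Delimit Scope nat_scope with N.
Import Order.TTheory GRing.Theory Num.Theory.

Lemma RlebP x y : reflect (x <= y)%R (Rleb x y).
Proof. by rewrite /Rleb; case: Rle_dec => h; constructor. Qed.

Local Open Scope R_scope.

Lemma exp_le x y : x <= y -> exp x <= exp y.
Proof. by case/Rle_lt_or_eq_dec => [/exp_increasing/Rlt_le | ->] //; apply: Rle_refl. Qed.

Lemma exp_opp_mul x : exp (- x) * exp x = 1.
Proof. by rewrite -exp_plus Rplus_opp_l exp_0. Qed.

Lemma pow_exp (U : nat) x : exp x ^ U = exp (INR U * x).
Proof.
elim: U => [|U IH]; first by rewrite Rmult_0_l exp_0.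
rewrite -tech_pow_Rmult IH -exp_plus S_INR; congr exp; ring.
Qed.

Lemma pow_one_add_le_exp (U : nat) x : 0 <= 1 + x -> (1 + x) ^ U <= exp (INR U * x).
Proof. by move=> hx; rewrite -pow_exp; apply: pow_incr; split=> //; apply: exp_ineq1_le. Qed.

Lemma pow_add_mul_le_exp (n k x : R) (U : nat) :
  0 < n -> 0 <= n + x * k -> (n + x * k) ^ U <= n ^ U * exp (x * (INR U * k / n)).
Proof.
move=> hn hnk; have -> : n + x * k = n * (1 + x * k / n) by field; lra.
rewrite Rpow_mult_distr; apply: Rmult_le_compat_l; first by apply: pow_le; lra.
have -> : x * (INR U * k / n) = INR U * (x * k / n) by field; lra.
apply: pow_one_add_le_exp; have -> : 1 + x * k / n = (n + x * k) / n by field; lra.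
by apply: Rmult_le_pos => //; apply/Rlt_le/Rinv_0_lt_compat.
Qed.

Lemma exp_opp_le_of_le a b : a <= b -> exp (- b) <= exp (- a).
Proof. by move=> h; apply: exp_le; lra. Qed.

Lemma expm1_le_mul_exp y : 0 <= y -> exp y - 1 <= y * exp y.
Proof. by move=> hy; have := exp_ineq1_le (- y); have := exp_opp_mul y; have := exp_pos y; nra. Qed.

Lemma exp_le_quadratic x : 0 <= x <= 1 / 2 -> exp x <= 1 + x + 2 * x ^ 2.
Proof.
move=> hx; have := exp_ineq1_le (- x); have := exp_opp_mul x; have := exp_pos x.
move=> hpos hinv hle; have : exp x * (1 - x) <= 1 by nra.
nra.
Qed.

Lemma exp_opp_le_quadratic x : 0 <= x -> exp (- x) <= 1 - x + x ^ 2.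
Proof.
move=> hx; have := exp_ineq1_le x; have := exp_opp_mul x; have := exp_pos (- x).
move=> hpos hinv hle; have : exp (- x) * (1 + x) <= 1 by nra.
nra.
Qed.

Lemma le_mul_exp_sub c m a b : c * exp a <= m * exp b -> c <= m * exp (b - a).
Proof.
move=> h; have -> : exp (b - a) = exp b * exp (- a) by rewrite -exp_plus.
have := Rmult_le_compat_r _ _ _ (Rlt_le _ _ (exp_pos (- a))) h.
by rewrite Rmult_assoc [exp a * _]Rmult_comm exp_opp_mul Rmult_1_r Rmult_assoc.
Qed.

(* In the tail lemmas [cnt] is the number of samples in a tail event and [q] the number of all
   samples.  For a small mean Markov's inequality is applied to exp(th z) - 1 instead of exp(th z),
   which keeps a factor mu in the bound. *)
Lemma upper_tail_small_mean mu t cnt q :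
  0 <= mu -> 1 <= mu + t -> 0 <= cnt -> 0 <= q ->
  (forall th, 0 <= th ->
     cnt * (exp (th * (mu + t)) - 1) <= q * (exp ((exp th - 1) * mu) - 1)) ->
  cnt <= q * (4 * mu * exp (mu - t)).
Proof.
move=> hmu hmt hcnt hq /(_ 1 ltac:(lra)); rewrite Rmult_1_l => h.
have he := exp_le_3; have := exp_ineq1_le 1 => he2.
have hm := expm1_le_mul_exp ((exp 1 - 1) * mu) ltac:(nra).
have hm2 : exp ((exp 1 - 1) * mu) <= exp (mu + t) * exp (mu - t).
  by rewrite -exp_plus; apply: exp_le; nra.
have ha : 2 <= exp (mu + t) by have := exp_ineq1_le (mu + t); lra.
have hw := exp_pos (mu - t); have hz := exp_pos ((exp 1 - 1) * mu).
set a := exp (mu + t) in h hm2 ha; set w := exp (mu - t) in hm2 hw *.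
set z := exp ((exp 1 - 1) * mu) in h hm hm2 hz.
have hzm : z - 1 <= 2 * mu * (a * w).
  have : (exp 1 - 1) * mu * z <= 2 * mu * z by apply: Rmult_le_compat_r; nra.
  have : 2 * mu * z <= 2 * mu * (a * w) by apply: Rmult_le_compat_l; lra.
  lra.
have : cnt * a <= q * (4 * mu * w) * a by nra.
by apply: Rmult_le_reg_r; lra.
Qed.

Lemma upper_tail_large_mean mu t cnt q :
  0 < mu -> 0 <= t <= 2 * mu -> 0 <= q ->
  (forall th, 0 <= th -> cnt * exp (th * (mu + t)) <= q * exp ((exp th - 1) * mu)) ->
  cnt <= q * exp (- (t ^ 2 / (8 * mu))).
Proof.
move=> hmu ht hq; set th := t / (4 * mu) => h.
have e : th * (4 * mu) = t by rewrite /th; field; lra.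
have hth : 0 <= th <= 1 / 2 by split; nra.
have hq2 : q * exp ((exp th - 1) * mu) <= q * exp ((th + 2 * th ^ 2) * mu).
  apply: Rmult_le_compat_l => //; apply: exp_le; apply: Rmult_le_compat_r; first lra.
  by have := exp_le_quadratic th hth; lra.
have := le_mul_exp_sub _ _ _ _ (Rle_trans _ _ _ (h th (proj1 hth)) hq2).
by have -> : (th + 2 * th ^ 2) * mu - th * (mu + t) = - (t ^ 2 / (8 * mu))
  by rewrite /th; field; lra.
Qed.

Lemma lower_tail_subgaussian mu t cnt q :
  0 < mu -> 0 <= t -> 0 <= q ->
  (forall th, 0 <= th -> cnt * exp (- (th * (mu - t))) <= q * exp ((exp (- th) - 1) * mu)) ->
  cnt <= q * exp (- (t ^ 2 / (4 * mu))).
Proof.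
move=> hmu ht hq; set th := t / (2 * mu) => h.
have e : th * (2 * mu) = t by rewrite /th; field; lra.
have hth : 0 <= th by nra.
have hq2 : q * exp ((exp (- th) - 1) * mu) <= q * exp ((- th + th ^ 2) * mu).
  apply: Rmult_le_compat_l => //; apply: exp_le; apply: Rmult_le_compat_r; first lra.
  by have := exp_opp_le_quadratic th hth; lra.
have := le_mul_exp_sub _ _ _ _ (Rle_trans _ _ _ (h th hth) hq2).
by have -> : (- th + th ^ 2) * mu - - (th * (mu - t)) = - (t ^ 2 / (4 * mu))
  by rewrite /th; field; lra.
Qed.

Lemma upper_tail_le mu t L cnt q :
  0 <= mu -> 1 <= L -> 2 * L <= t -> 8 * L * mu <= t ^ 2 -> 0 <= cnt <= q ->
  (forall th, 0 <= th ->
     cnt * (exp (th * (mu + t)) - 1) <= q * (exp ((exp th - 1) * mu) - 1)) ->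
  cnt <= q * (4 * mu * exp (- L)).
Proof.
move=> hmu hL htL htmu hcnt h; have hq : 0 <= q by lra.
have hE := exp_pos (- L).
case: (Rle_lt_dec mu (t / 2)) => hsmall.
- apply: Rle_trans (upper_tail_small_mean _ _ _ _ hmu _ _ hq h) _; try lra.
  by apply: Rmult_le_compat_l => //; apply: Rmult_le_compat_l; [lra | apply: exp_le; lra].
- have h' : forall th, 0 <= th -> cnt * exp (th * (mu + t)) <= q * exp ((exp th - 1) * mu).
    by move=> th /h; lra.
  apply: Rle_trans (upper_tail_large_mean _ _ _ _ _ _ hq h') _; try lra.
  have : exp (- (t ^ 2 / (8 * mu))) <= exp (- L).
    have e : t ^ 2 / (8 * mu) * (8 * mu) = t ^ 2 by field; lra.
    by apply: exp_opp_le_of_le; nra.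
  by move=> hA; apply: Rmult_le_compat_l => //; nra.
Qed.

Lemma lower_tail_le mu t L cnt q :
  0 <= mu -> 1 <= L -> 2 * L <= t -> 4 * L * mu <= t ^ 2 -> 0 <= cnt -> 0 <= q ->
  (mu < t -> cnt = 0) ->
  (forall th, 0 <= th -> cnt * exp (- (th * (mu - t))) <= q * exp ((exp (- th) - 1) * mu)) ->
  cnt <= q * (mu * exp (- L)).
Proof.
move=> hmu0 hL htL htmu hcnt hq hempty h; have hE := exp_pos (- L).
case: (Rlt_le_dec mu t) => [/hempty -> | hmu].
  by apply: Rmult_le_pos => //; apply: Rmult_le_pos; lra.
apply: Rle_trans (lower_tail_subgaussian _ _ _ _ _ _ hq h) _; try lra.
have : exp (- (t ^ 2 / (4 * mu))) <= exp (- L).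
  have e : t ^ 2 / (4 * mu) * (4 * mu) = t ^ 2 by field; lra.
  by apply: exp_opp_le_of_le; nra.
by move=> hA; apply: Rmult_le_compat_l => //; nra.
Qed.

Lemma far_estimate_split n u tt pc k z :
  0 < n -> 0 < u -> 0 < tt -> 0 < pc ->
  ~ Rabs (n / u * z - k) <= n / tt + k / pc ->
  let mu := u * k / n in let t := u / tt + mu / pc in mu + t <= z \/ z <= mu - t.
Proof.
move=> hn hu htt hpc hfar mu t.
have hun : 0 < u / n by apply: Rdiv_lt_0_compat.
have e_t : t = u / n * (n / tt + k / pc) by rewrite /t /mu; field; lra.
have e_z : z - mu = u / n * (n / u * z - k) by rewrite /mu; field; lra.
move: hfar; rewrite /Rabs; case: Rcase_abs => _ hfar.
- by right; have := Rmult_lt_compat_l _ _ _ hun (Rnot_le_lt _ _ hfar); lra.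
- by left; have := Rmult_lt_compat_l _ _ _ hun (Rnot_le_lt _ _ hfar); lra.
Qed.

Lemma deviation_threshold u tt pc mu L :
  0 < tt -> 1 <= pc -> 0 <= mu -> 0 <= L -> 2 * L <= u / (tt * pc) ->
  let t := u / tt + mu / pc in 2 * L <= t /\ 8 * L * mu <= t ^ 2.
Proof.
move=> htt hpc hmu hL0 hL t; set w := u / (tt * pc) in hL *.
have e1 : u / tt = w * pc by rewrite /w; field; lra.
have hmupc : 0 <= mu / pc by apply: Rmult_le_pos => //; apply/Rlt_le/Rinv_0_lt_compat; lra.
have hab : u / tt * (mu / pc) = w * mu by rewrite /w; field; lra.
have hw : w <= w * pc by have := Rmult_le_compat_l w 1 pc ltac:(lra) hpc; lra.
split; first by rewrite /t e1; lra.
have : 0 <= (u / tt - mu / pc) ^ 2 by apply: pow2_ge_0.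
rewrite /t; nra.
Qed.

Section Counting.
Local Open Scope ring_scope.

Lemma card_mul_le_sum (S : finType) (A : {set S}) (w : S -> R) (m : R) :
  (forall s, 0 <= w s) -> {in A, forall s, m <= w s} -> #|A|%:R * m <= \sum_s w s.
Proof.
move=> w_ge0 Aw; rewrite (bigID (mem A)) /= -[_ * m]addr0.
apply: lerD; last by apply: sumr_ge0.
by rewrite mulr_natl -sumr_const; apply: ler_sum.
Qed.

Lemma card_bigcup_le (T I : finType) (A : I -> {set T}) :
  leq #|\bigcup_i A i| (\sum_i #|A i|)%N.
Proof.
apply: (big_ind2 (fun (B : {set T}) n => leq #|B| n)); first by rewrite cards0.
  by move=> B1 B2 n1 n2 h1 h2; apply: leq_trans (leq_card_setU _ _) (leq_add h1 h2).
by [].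
Qed.

End Counting.

Section Sampling.
Variables (N M U : nat) (X : 'I_N -> 'I_M).

Section Sums.
Local Open Scope ring_scope.

Lemma sum_if_eq_kappa (j : 'I_M) (e : R) :
  \sum_(i : 'I_N) (if X i == j then e else 1) = N%:R + (e - 1) * (kappa X j)%:R.
Proof.
rewrite (eq_bigr (fun i => 1 + (e - 1) * (X i == j)%:R)); last first.
  by move=> i _; case: eqP => _; rewrite ?mulr1 ?mulr0 ?addr0 // addrC subrK.
rewrite big_split /= sumr_const card_ord -mulr_sumr -natr_sum /kappa -sum1_card.
do 3 f_equal; rewrite [RHS]big_mkcond; apply: eq_bigr => i _.
by rewrite inE; case: eqP.
Qed.

Lemma sum_exp_zcount (j : 'I_M) (th : R) :
  \sum_(s : {ffun 'I_U -> 'I_N}) exp (th * INR (zcount X s j)) =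
  (N%:R + (exp th - 1) * (kappa X j)%:R) ^+ U.
Proof.
pose F (k : 'I_U) (i : 'I_N) := if X i == j then exp th else 1.
have eF s : exp (th * INR (zcount X s j)) = \prod_(k : 'I_U) F k (s k).
  rewrite INRE RmultE mulr_natr -expRX /zcount -prodr_const big_mkcond /=.
  by apply: eq_bigr => k _; rewrite inE.
rewrite (eq_bigr _ (fun s _ => eF s)) -(bigA_distr_bigA F) /F /=.
by rewrite prodr_const card_ord sum_if_eq_kappa.
Qed.

Lemma card_zcount_ge (j : 'I_M) (th a : R) : 0 <= th ->
  #|[set s : {ffun 'I_U -> 'I_N} | Rleb a (INR (zcount X s j))]|%:R * (exp (th * a) - 1)
  <= (N%:R + (exp th - 1) * (kappa X j)%:R) ^+ U - N%:R ^+ U.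
Proof.
move=> /RleP th0; rewrite -sum_exp_zcount.
have -> : N%:R ^+ U = \sum_(s : {ffun 'I_U -> 'I_N}) 1 :> R.
  by rewrite sumr_const card_ffun !card_ord -natrX.
rewrite -sumrB.
apply: card_mul_le_sum => s.
  rewrite subr_ge0 -R1E -exp_0.
  by apply/RleP/exp_le/Rmult_le_pos => //; apply: pos_INR.
rewrite inE => /RlebP ha; rewrite lerD2r.
by apply/RleP/exp_le/Rmult_le_compat_l.
Qed.

Lemma card_zcount_le (j : 'I_M) (th b : R) : 0 <= th ->
  #|[set s : {ffun 'I_U -> 'I_N} | Rleb (INR (zcount X s j)) b]|%:R * exp (- (th * b))
  <= (N%:R + (exp (- th) - 1) * (kappa X j)%:R) ^+ U.
Proof.
move=> /RleP th0; rewrite -sum_exp_zcount.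
apply: card_mul_le_sum => s; first by apply/RleP/Rlt_le/exp_pos.
rewrite inE => /RlebP hb.
apply/RleP/exp_le; have := Rmult_le_compat_l _ _ _ th0 hb; lra.
Qed.

Lemma sum_kappa : (\sum_(j : 'I_M) kappa X j)%N = N.
Proof.
rewrite -[RHS]card_ord -sum1_card (partition_big X xpredT) //=.
by apply: eq_bigr => j _; rewrite sum1_card /kappa; apply: eq_card => i; rewrite inE.
Qed.

Lemma card_bigcup_le_kappa (S : finType) (A : 'I_M -> {set S}) (K : R) :
  (forall j, #|A j|%:R <= K * (kappa X j)%:R) -> #|\bigcup_j A j|%:R <= K * N%:R.
Proof.
move=> hA; apply: le_trans (_ : (\sum_j #|A j|)%:R <= _).
  by rewrite ler_nat card_bigcup_le.
by rewrite -sum_kappa !natr_sum mulr_sumr; apply: ler_sum => j _.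
Qed.

End Sums.

Lemma card_sample_le (A : {set {ffun 'I_U -> 'I_N}}) : INR #|A| <= INR N ^ U.
Proof.
rewrite !INRE RpowE -natrX; apply/RleP; rewrite ler_nat.
by apply: leq_trans (max_card _) _; rewrite card_ffun !card_ord.
Qed.

Lemma kappa_le (j : 'I_M) : INR (kappa X j) <= INR N.
Proof. by apply/le_INR/ssrnat.leP; rewrite -{2}(card_ord N) max_card. Qed.

Hypothesis N_gt0 : (0 < N)%N.

Definition expected_zcount (j : 'I_M) : R := INR U * INR (kappa X j) / INR N.

Lemma INR_N_gt0 : 0 < INR N.
Proof. exact/lt_0_INR/ssrnat.ltP. Qed.

Lemma expected_zcount_ge0 (j : 'I_M) : 0 <= expected_zcount j.
Proof.
apply: Rmult_le_pos; first by apply: Rmult_le_pos; apply: pos_INR.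
exact/Rlt_le/Rinv_0_lt_compat/INR_N_gt0.
Qed.

Lemma card_upper_tail_le (j : 'I_M) (t L : R) :
  let mu := expected_zcount j in
  1 <= L -> 2 * L <= t -> 8 * L * mu <= t ^ 2 ->
  INR #|[set s : {ffun 'I_U -> 'I_N} | Rleb (mu + t) (INR (zcount X s j))]|
  <= INR N ^ U * (4 * mu * exp (- L)).
Proof.
move=> mu hL htL htmu; have hn := INR_N_gt0; have hk := kappa_le j.
apply: (upper_tail_le _ t) => //; first exact: expected_zcount_ge0.
  by split; [apply: pos_INR | apply: card_sample_le].
move=> th hth; have := card_zcount_ge j th (mu + t) (introT RleP hth).
move/RleP; rewrite -!INRE -!RpowE -!RminusE -!RmultE -!RplusE -!R1E => hmgf.
have hnk : 0 <= INR N + (exp th - 1) * INR (kappa X j).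
  by have := exp_pos th; have := pos_INR (kappa X j); nra.
have := pow_add_mul_le_exp _ _ _ U hn hnk; rewrite -/(expected_zcount j) -/mu.
by rewrite !Rmult_minus_distr_l !Rmult_1_r; lra.
Qed.

Lemma card_lower_tail_le (j : 'I_M) (t L : R) :
  let mu := expected_zcount j in
  1 <= L -> 2 * L <= t -> 4 * L * mu <= t ^ 2 ->
  INR #|[set s : {ffun 'I_U -> 'I_N} | Rleb (INR (zcount X s j)) (mu - t)]|
  <= INR N ^ U * (mu * exp (- L)).
Proof.
move=> mu hL htL htmu; have hn := INR_N_gt0; have hk := kappa_le j.
apply: (lower_tail_le _ t) => //.
- exact: expected_zcount_ge0.
- exact: pos_INR.
- by apply: pow_le; lra.
- move=> hlt; rewrite (_ : [set s | _] = set0) ?cards0 //; apply/setP => s; rewrite !inE.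
  by apply/negbTE/RlebP => hz; have := pos_INR (zcount X s j); lra.
move=> th hth; have := card_zcount_le j th (mu - t) (introT RleP hth).
move/RleP; rewrite -!INRE -!RpowE -!RminusE -!RmultE -!RplusE -!R1E => hmgf.
have hnk : 0 <= INR N + (exp (- th) - 1) * INR (kappa X j).
  by have := exp_pos (- th); have := pos_INR (kappa X j); nra.
have := pow_add_mul_le_exp _ _ _ U hn hnk; rewrite -/(expected_zcount j) -/mu.
lra.
Qed.

Lemma card_far_estimate_le (j : 'I_M) (tt pc L : R) :
  0 < tt -> 1 <= pc -> 1 <= L -> 2 * L <= INR U / (tt * pc) ->
  INR #|[set s : {ffun 'I_U -> 'I_N} |
         ~~ Rleb (Rabs (kappa_est X s j - INR (kappa X j))) (INR N / tt + INR (kappa X j) / pc)]|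
  <= INR N ^ U * (5 * expected_zcount j * exp (- L)).
Proof.
move=> htt hpc hL hUL; set mu := expected_zcount j.
have := deviation_threshold _ _ _ mu L htt hpc (expected_zcount_ge0 j) ltac:(lra) hUL.
set t := INR U / tt + mu / pc => -[htL htmu].
have hup := card_upper_tail_le j t L hL htL htmu.
have h4 : 4 * L * mu <= t ^ 2 by have := expected_zcount_ge0 j; nra.
have hlo := card_lower_tail_le j t L hL htL h4.
rewrite -/mu in hup hlo.
have hU : 0 < INR U.
  case: (Rle_lt_or_eq_dec _ _ (pos_INR U)) => // hU0.
  by rewrite -hU0 /Rdiv Rmult_0_l in hUL; lra.
set up := [set s : {ffun 'I_U -> 'I_N} | Rleb (mu + t) (INR (zcount X s j))] in hup *.
set lo := [set s : {ffun 'I_U -> 'I_N} | Rleb (INR (zcount X s j)) (mu - t)] in hlo *.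
apply: Rle_trans (_ : _ <= INR #|up| + INR #|lo|) _; last first.
  have -> : 5 * mu * exp (- L) = 4 * mu * exp (- L) + mu * exp (- L) by ring.
  by rewrite Rmult_plus_distr_l; lra.
rewrite -plus_INR; apply/le_INR/ssrnat.leP; apply: leq_trans (leq_card_setU _ _).
apply/subset_leq_card/subsetP => s; rewrite !inE => /RlebP hfar.
have := far_estimate_split _ (INR U) tt pc _ _ INR_N_gt0 hU htt ltac:(lra) hfar.
by rewrite -/(expected_zcount j) -/mu -/t; case=> /RlebP ->; rewrite ?orbT.
Qed.

Lemma card_not_good_le (c : R) (T : nat) (L : R) :
  0 < INR T -> 1 <= Rpower (INR T) c -> 1 <= L ->
  2 * L <= INR U / (INR T * Rpower (INR T) c) ->
  INR #|[set s : {ffun 'I_U -> 'I_N} | ~~ good_sample c T X s]|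
  <= INR N ^ U * (5 * INR U * exp (- L)).
Proof.
move=> hT hpc hL hUL; have hn := INR_N_gt0.
set K := INR N ^ U * (5 * INR U * exp (- L)) / INR N.
pose far j := [set s : {ffun 'I_U -> 'I_N} | ~~ Rleb (Rabs (kappa_est X s j - INR (kappa X j)))
                                               (INR N / INR T + INR (kappa X j) / Rpower (INR T) c)].
have -> : [set s | ~~ good_sample c T X s] = \bigcup_j far j.
  apply/setP => s; rewrite inE negb_forall; apply/existsP/bigcupP => [[j hj] | [j _]].
    by exists j; rewrite // /far inE.
  by rewrite /far inE; exists j.
apply: Rle_trans (_ : INR #|\bigcup_j far j| <= K * INR N) _; last by right; rewrite /K; field; lra.
rewrite !INRE; apply/RleP/card_bigcup_le_kappa => j; apply/RleP; rewrite -!INRE.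
apply: Rle_trans (card_far_estimate_le j _ _ _ hT hpc hL hUL) _.
by rewrite -(RmultE K); right; rewrite /K /expected_zcount; field; lra.
Qed.

End Sampling.

Lemma nat_ceil_ge x : x <= INR (nat_ceil x).
Proof.
rewrite /nat_ceil /Int_part; have [_ hlow] := archimed (- x).
have -> : (- (up (- x) - 1))%Z = (1 - up (- x))%Z by ring.
case: (Z_le_gt_dec 0 (1 - up (- x))) => hz.
  by rewrite INR_IZR_INZ Z2Nat.id // minus_IZR; lra.
have : IZR (1 - up (- x)) < 0 by apply: IZR_lt; lia.
by rewrite minus_IZR; have := pos_INR (Z.to_nat (1 - up (- x))); lra.
Qed.

Lemma nat_ceil_le x : 0 <= x -> INR (nat_ceil x) <= x + 1.
Proof.
move=> hx; rewrite /nat_ceil /Int_part; have [hup _] := archimed (- x).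
have -> : (- (up (- x) - 1))%Z = (1 - up (- x))%Z by ring.
case: (Z_le_gt_dec 0 (1 - up (- x))) => hz.
  by rewrite INR_IZR_INZ Z2Nat.id // minus_IZR; lra.
have -> : Z.to_nat (1 - up (- x)) = 0%N by lia.
by rewrite /=; lra.
Qed.

Lemma one_le_ln x : 3 <= x -> 1 <= ln x.
Proof.
move=> hx; case: (Rle_lt_dec 1 (ln x)) => // /exp_increasing.
by rewrite exp_ln; [have := exp_le_3; lra | lra].
Qed.

Lemma Rpower_ge1_le x c : 1 <= x -> 0 <= c <= 1 -> 1 <= Rpower x c <= x.
Proof.
move=> hx hc; split; [rewrite -(Rpower_O x) | rewrite -{2}(Rpower_1 x)]; try lra;
  by apply: Rle_Rpower; lra.
Qed.

Lemma sample_size_bounds c T :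
  3 <= INR T -> let pc := Rpower (INR T) c in
  24 * (INR T * pc) * ln (INR T) <= INR (sample_size c T) <= 24 * (INR T * pc) * ln (INR T) + 1.
Proof.
move=> hT pc; rewrite /sample_size Rpower_plus Rpower_1 -/pc; last lra.
have hpc : 0 < pc by apply: exp_pos.
split; first exact: nat_ceil_ge.
apply: nat_ceil_le; apply: Rmult_le_pos; first nra.
by have := one_le_ln _ hT; lra.
Qed.

Lemma fail_prob_le c T N M (X : 'I_N -> 'I_M) (K : R) : (0 < N)%N ->
  INR #|[set s : {ffun 'I_(sample_size c T) -> 'I_N} | ~~ good_sample c T X s]|
    <= INR N ^ sample_size c T * K ->
  fail_prob c T X <= K.
Proof.
move=> N_gt0 h; have hNU : 0 < INR N ^ sample_size c T by apply/pow_lt/lt_0_INR/ssrnat.ltP.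
rewrite /fail_prob pow_INR; apply: (Rmult_le_reg_r _ _ _ hNU).
by rewrite /Rdiv Rmult_assoc Rinv_l ?Rmult_1_r; [rewrite Rmult_comm | lra].
Qed.

Lemma failure_bound_le (tt pc u : R) :
  3 <= tt -> 1 <= pc <= tt -> u <= 24 * (tt * pc) * ln tt + 1 ->
  5 * u * exp (- (12 * ln tt)) <= 125 / tt.
Proof.
move=> htt hpc hu.
have hln : ln tt <= tt by have := exp_ineq1_le (ln tt); rewrite exp_ln; lra.
have hln1 := one_le_ln tt htt.
have hu3 : u <= 25 * tt ^ 3.
  have : tt * pc * ln tt <= tt * tt * tt by apply: Rmult_le_compat; nra.
  have : 1 <= tt ^ 3 by have := pow_R1_Rle tt 3 ltac:(lra); lra.
  lra.
have e12 : exp (- (12 * ln tt)) = / tt ^ 12.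
  rewrite exp_Ropp -Rpower_pow; last lra.
  by rewrite /Rpower (_ : INR 12 = 12) //= ; ring.
have h9 : 1 <= tt ^ 8 by have := pow_R1_Rle tt 8 ltac:(lra); lra.
rewrite e12; apply: (Rmult_le_reg_r (tt ^ 12)); first by apply: pow_lt; lra.
have -> : 5 * u * / tt ^ 12 * tt ^ 12 = 5 * u by field; lra.
have -> : 125 / tt * tt ^ 12 = 125 * (tt ^ 3 * tt ^ 8) by field; lra.
have := Rmult_le_compat_l (tt ^ 3) 1 (tt ^ 8) ltac:(apply: pow_le; lra) h9; lra.
Qed.

Theorem lemma11 (c : R) (hc0 : (0 < c)%R) (hc1 : (c <= 1)%R) :
  exists (C : R) (T0 : nat), (0 < C)%R /\
    forall (N M : nat) (X : 'I_N -> 'I_M) (T : nat),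
      (0 < N)%N -> (T0 <= T)%N ->
      (fail_prob c T X <= C / INR T)%R.
Proof.
exists 125, 3%N; split; first lra.
move=> N M X T N_gt0 T_ge3.
have hT : 3 <= INR T by have := le_INR 3 T (ssrnat.leP T_ge3); rewrite /=; lra.
have hlnT := one_le_ln _ hT.
have hpc := Rpower_ge1_le (INR T) c ltac:(lra) ltac:(lra).
have [hU_ge hU_le] := sample_size_bounds c T hT.
set pc := Rpower (INR T) c in hpc hU_ge hU_le; set U := sample_size c T in hU_ge hU_le *.
have hUL : 2 * (12 * ln (INR T)) <= INR U / (INR T * pc).
  have e : INR U / (INR T * pc) * (INR T * pc) = INR U by field; lra.
  have : 0 < INR T * pc by nra.
  nra.
apply: Rle_trans (failure_bound_le _ pc (INR U) hT hpc hU_le).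
apply: fail_prob_le => //.
exact: (card_not_good_le _ _ _ X N_gt0 c T (12 * ln (INR T)) ltac:(lra) (proj1 hpc) ltac:(lra) hUL).
Qed.
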